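(* Let $X\sim P_X$ be a real-valued random variable, let $Z\sim\mathcal{N}(0,1)$ be independent of $X$, set $Y=X+Z$, and fix $a>0$. Define the measure $\mu$ on $\mathbb{R}$ by $\mu(\mathrm{d}x)=\exp\!\left((1-a)\frac{x^2}{2}\right)P_X(\sqrt{a}\,\mathrm{d}x)$, i.e. $\mu$ has density $x\mapsto \exp((1-a)x^2/2)$ with respect to the measure $A\mapsto P_X(\sqrt a A)$. Let $\phi$ and $\Phi$ be the standard Gaussian pdf and cdf, and $g(x)=\max(\Phi(x),1-\Phi(x))$ (so $g'(x)=\mathsf{sign}(x)\phi(x)$). Then $\mathsf{m}(X\mid Y=y)=ay$ for all $y\in\mathbb{R}$ if and only if for all $y\in\mathbb{R}$ $$0=\int_{-\infty}^{\infty}\mathsf{sign}(x-y)\,\phi(y-x)\,\mu(\mathrm{d}x)=\int_{-\infty}^{\infty}g'(x-y)\,\mu(\mathrm{d}x).$$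
   Context: The conditional median is $\mathsf{m}(X\mid Y=y)=F^{-1}_{X\mid Y=y}(1/2)$, where $F_{X\mid Y=y}$ is the conditional cdf of $X$ given $Y=y$ and $F^{-1}(p)=\inf\{x\in\mathbb{R}: p\le F(x)\}$. *)

From HB Require Import structures.
From mathcomp Require Import all_boot all_order all_algebra.
From mathcomp Require Import all_classical all_reals all_analysis.
From mathcomp Require Import measurable_realfun.
Set Implicit Arguments. Unset Strict Implicit. Unset Printing Implicit Defensive.
Import Order.TTheory GRing.Theory Num.Theory.
Import numFieldNormedType.Exports.
Local Open Scope classical_set_scope.
Local Open Scope ring_scope.

Section defs.
Context {R : realType}.

Definition phi (x : R) : R := normal_pdf 0 1 x.

Definition gprime (x : R) : R := Num.sg x * phi x.

(* Conditional cdf of X given Y = y, where Y = X + Z, Z ~ N(0,1) independent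
   of X ~ P:  F_{X|Y=y}(t) = E[phi(y-X) 1{X <= t}] / E[phi(y-X)]  (Bayes). *)
Definition cond_cdf (P : probability R R) (y t : R) : R :=
  fine (\int[P]_(x in `]-oo, t]) (phi (y - x))%:E)%E
  / fine (\int[P]_x (phi (y - x))%:E)%E.

Definition cond_median (P : probability R R) (y : R) : R :=
  inf [set t : R | 2^-1 <= cond_cdf P y t].
End defs.

Section scaled.
Context {R : realType} (P : probability R R) (a : R).

Definition scaled (A : set R) : \bar R :=
  P ((fun x => x / Num.sqrt a) @^-1` A).

Let mscale : measurable_fun [set: R] (fun x : R => x / Num.sqrt a).
Proof. by apply: measurable_funM => //; exact: measurable_cst. Qed.

Let scaled0 : scaled set0 = 0%E.
Proof. by rewrite /scaled preimage_set0 measure0. Qed.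

Let scaled_ge0 A : (0 <= scaled A)%E.
Proof. exact: measure_ge0. Qed.

Let scaled_sigma_additive : semi_sigma_additive scaled.
Proof.
move=> F mF tF mUF; rewrite /scaled preimage_bigcup.
apply: measure_semi_sigma_additive.
- by move=> n; rewrite -[X in measurable X]setTI; exact: mscale.
- apply/trivIsetP => /= i j _ _ ij; rewrite -preimage_setI.
  by move/trivIsetP : tF => /(_ _ _ _ _ ij) ->//; rewrite preimage_set0.
- by rewrite -preimage_bigcup -[X in measurable X]setTI; exact: mscale.
Qed.

HB.instance Definition _ := isMeasure.Build _ _ _
  scaled scaled0 scaled_ge0 scaled_sigma_additive.
End scaled.

Section mu.
Context {R : realType} (P : probability R R) (a : R).

Definition dens (x : R) : \bar R := (expR ((1 - a) * x ^+ 2 / 2))%:E.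

Definition mu_meas (A : set R) : \bar R := (\int[scaled P a]_(x in A) dens x)%E.

Let mdens : measurable_fun [set: R] dens.
Proof.
apply/measurable_EFinP; apply: measurableT_comp => //.
apply: measurable_funM => //.
by apply: measurable_funM => //; exact: measurable_funX.
Qed.

Let dens_ge0 x : (0 <= dens x)%E.
Proof. by rewrite lee_fin expR_ge0. Qed.

Let mu0 : mu_meas set0 = 0%E.
Proof. by rewrite /mu_meas integral_set0. Qed.

Let mu_ge0 A : (0 <= mu_meas A)%E.
Proof. by apply: integral_ge0 => x _; exact: dens_ge0. Qed.

Let mu_sigma_additive : semi_sigma_additive mu_meas.
Proof. exact: semi_sigma_additive_nng_induced. Qed.

HB.instance Definition _ := isMeasure.Build _ _ _
  mu_meas mu0 mu_ge0 mu_sigma_additive.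
End mu.

From mathcomp Require Import all_boot all_order all_algebra.
From mathcomp Require Import all_classical all_reals all_analysis.
From mathcomp Require Import measurable_realfun ring lra.
Import Order.TTheory GRing.Theory Num.Theory.
Import numFieldNormedType.Exports.
Local Open Scope classical_set_scope.
Local Open Scope ring_scope.

(* Let W_c(D) = \int_D phi(c - x) P(dx) be the unnormalised posterior of X
   given Y = c, so that the conditional cdf at t is W_c(-oo,t] / W_c(R).
   The substitution x |-> x / sqrt a turns the integral of
   sign(x - sqrt a c) phi(sqrt a c - x) against mu into
   exp((1-a)c^2/2) (W_c(ac,+oo) - W_c(-oo,ac)), so the integral condition
   says that every posterior is balanced around ac.
   Balance at c puts ac in the median set; a median t < ac is ruled out by
   the balance at c' = s/a for some s in (t, ac), because the likelihood
   ratio phi(c' - x) / phi(c - x) is decreasing in x.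
   Conversely, if all the medians are ac, then 2 W_c'(-oo,ac] < W_c'(R) for
   c' > c and W_c'(R) <= 2 W_c'(-oo,ac) for c' < c; letting c' tend to c
   (dominated convergence) yields the balance at c. *)

Section density.
Local Open Scope ereal_scope.
Context {d} {T : measurableType d} {R : realType}.
Variables (m nu : {measure set T -> \bar R}) (g : T -> R).
Hypotheses (mg : measurable_fun setT g) (g_ge0 : forall x, (0 <= g x)%R).
Hypothesis nuE : forall A, measurable A -> nu A = \int[m]_(x in A) (g x)%:E.
Import HBNNSimple.

Lemma integral_density_indic (A : set T) : measurable A ->
  \int[m]_x ((\1_A x)%:E * (g x)%:E) = nu A.
Proof.
move=> mA; rewrite nuE // [RHS]integral_mkcond; apply: eq_integral => x _.
by rewrite patchE indicE; case: (x \in A); rewrite ?mul1e ?mul0e.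
Qed.

Lemma integral_density_nnsfun (h : {nnsfun T >-> R}) :
  \int[nu]_x (h x)%:E = \int[m]_x ((h x)%:E * (g x)%:E).
Proof.
have h_ge0 r : r \in range h -> (0 <= r)%R.
  by rewrite inE => -[x _ <-].
rewrite integralT_nnsfun sintegralE.
under [RHS]eq_integral => x _.
  rewrite fimfunE -fsumEFin // ge0_mule_fsuml; last first.
    by move=> r; rewrite EFinM nnfun_muleindic_ge0.
  over.
rewrite ge0_integral_fsum //; last 2 first.
- by move=> k; apply: emeasurable_funM; apply/measurable_EFinP => //;
    exact: measurable_funM.
- by move=> k x _; rewrite mule_ge0 ?EFinM ?nnfun_muleindic_ge0 ?lee_fin.
apply: eq_fsbigr => r /h_ge0 r0.
under eq_integral do rewrite EFinM -muleA.
rewrite ge0_integralZl //.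
- by rewrite integral_density_indic.
- apply: emeasurable_funM => //; exact/measurable_EFinP.
- by move=> x _; rewrite mule_ge0 ?lee_fin.
Qed.

Lemma ge0_integral_density (f : T -> \bar R) :
  (forall x, 0 <= f x) -> measurable_fun setT f ->
  \int[nu]_x f x = \int[m]_x (f x * (g x)%:E).
Proof.
move=> f0 mf; pose h := nnsfun_approx measurableT mf.
have h_nd x : {homo (fun n => (h n x)%:E) : p q / (p <= q)%N >-> p <= q}.
  by move=> p q pq; rewrite lee_fin; exact/lefP/nd_nnsfun_approx.
have hf x : f x = limn (fun n => (h n x)%:E).
  by apply/esym/cvg_lim => //; exact: cvg_nnsfun_approx.
have hfg x : f x * (g x)%:E = limn (fun n => (h n x)%:E * (g x)%:E).
  by apply/esym/cvg_lim => //; apply: cvgeZr => //; exact: cvg_nnsfun_approx.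
have mh n : measurable_fun setT (fun x => (h n x)%:E).
  exact/measurable_EFinP.
transitivity (limn (fun n => \int[nu]_x (h n x)%:E)).
  under eq_integral do rewrite hf.
  by apply: monotone_convergence => // n x _; rewrite lee_fin.
under eq_fun do rewrite integral_density_nnsfun.
under [RHS]eq_integral do rewrite hfg.
apply/esym/monotone_convergence => //.
- by move=> n; apply: emeasurable_funM => //; exact/measurable_EFinP.
- by move=> n x _; rewrite mule_ge0 ?lee_fin.
- by move=> x _ p q pq; apply: lee_wpmul2r; [rewrite lee_fin | exact: h_nd].
Qed.

End density.

Section gaussian.
Context {R : realType}.
Implicit Types c x y : R.

Lemma phiE x : phi x = normal_peak 1 * expR (- x ^+ 2 / 2).
Proof. by rewrite /phi /normal_pdf oner_eq0 /normal_fun subr0 expr1n. Qed.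

Lemma phi_gt0 x : 0 < phi x.
Proof. by rewrite phiE mulr_gt0 ?expR_gt0 ?normal_peak_gt0 ?oner_eq0. Qed.

Lemma phi_ge0 x : 0 <= phi x.
Proof. exact/ltW/phi_gt0. Qed.

Lemma phi_le_peak x : phi x <= normal_peak 1.
Proof. by apply: normal_pdf_ub; rewrite oner_eq0. Qed.

Lemma phiN x : phi (- x) = phi x.
Proof. by rewrite !phiE sqrrN. Qed.

Lemma continuous_phi : continuous (@phi R).
Proof. by apply: continuous_normal_pdf; rewrite oner_eq0. Qed.

Lemma measurable_phiB y : measurable_fun setT (fun x => phi (y - x)).
Proof.
apply: (measurableT_comp (measurable_normal_pdf 0 1)).
exact: measurable_funB.
Qed.

Definition tilt c c' x := expR ((c ^+ 2 - c' ^+ 2) / 2 + (c' - c) * x).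

Lemma tilt_gt0 c c' x : 0 < tilt c c' x.
Proof. exact: expR_gt0. Qed.

Lemma phiB_tilt c c' x : phi (c' - x) = tilt c c' x * phi (c - x).
Proof. by rewrite !phiE mulrCA -expRD; congr (_ * expR _); field. Qed.

Lemma ltr_tilt c c' x1 x2 : c' < c -> x1 < x2 -> tilt c c' x2 < tilt c c' x1.
Proof. by move=> c'c x12; rewrite ltr_expR ltrD2l ltr_nM2l // subr_lt0. Qed.

Lemma ler_tilt c c' x1 x2 : c' <= c -> x1 <= x2 -> tilt c c' x2 <= tilt c c' x1.
Proof. by move=> c'c x12; rewrite ler_expR lerD2l ler_wnM2l // subr_le0. Qed.

Lemma phiB_scale (s c x : R) : s != 0 ->
  phi (s * c - x / s) * expR ((1 - s ^+ 2) * (x / s) ^+ 2 / 2) =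
  expR ((1 - s ^+ 2) * c ^+ 2 / 2) * phi (c - x).
Proof.
move=> s0; rewrite !phiE [RHS]mulrCA -[LHS]mulrA -!expRD; congr (_ * expR _).
by field.
Qed.

End gaussian.

Section half_lines.
Context {R : realType}.
Implicit Types (h : R -> R) (y : R).

Lemma funepos_sgB h y : (forall x, 0 <= h x) ->
  ((fun x => (Num.sg (x - y) * h x)%:E)^\+)%E = (EFin \o h) \_ `]y, +oo[.
Proof.
move=> h0; apply/funext => x.
rewrite funeposE patchE /= mem_setE in_itv /= andbT.
case: (ltgtP x y) => [xy|yx|->].
- by rewrite ltr0_sg ?subr_lt0 // mulN1r max_r // lee_fin oppr_le0.
- by rewrite gtr0_sg ?subr_gt0 // mul1r max_l // lee_fin.
- by rewrite subrr sgr0 mul0r maxxx.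
Qed.

Lemma funeneg_sgB h y : (forall x, 0 <= h x) ->
  ((fun x => (Num.sg (x - y) * h x)%:E)^\-)%E = (EFin \o h) \_ `]-oo, y[.
Proof.
move=> h0; apply/funext => x.
rewrite funenegE patchE /= mem_setE in_itv /=.
case: (ltgtP x y) => [xy|yx|->].
- by rewrite ltr0_sg ?subr_lt0 // mulN1r opprK max_l // lee_fin.
- by rewrite gtr0_sg ?subr_gt0 // mul1r max_r // lee_fin oppr_le0.
- by rewrite subrr sgr0 mul0r oppr0 maxxx.
Qed.

Lemma preimage_divr_itvoy (s c : R) : 0 < s ->
  (fun x => x / s) @^-1` `]s * c, +oo[ = `](s ^+ 2 * c)%R, +oo[%classic.
Proof.
move=> s0; apply/seteqP; split=> x /=;
  by rewrite !in_itv /= !andbT ltr_pdivlMr // expr2 mulrAC.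
Qed.

Lemma preimage_divr_itvNyo (s c : R) : 0 < s ->
  (fun x => x / s) @^-1` `]-oo, s * c[ = `]-oo, (s ^+ 2 * c)%R[%classic.
Proof.
move=> s0; apply/seteqP; split=> x /=;
  by rewrite !in_itv /= ltr_pdivrMr // expr2 mulrAC.
Qed.
End half_lines.

Section posterior_weight.
Context {R : realType} (P : probability R R).
Implicit Types (c y : R) (A B D : set R).

(* The Bayes numerator P(X \in D, Y \in dy) / dy: [cond_cdf P y t] is
   [posterior_weight P y `]-oo, t] / posterior_weight P y setT]. *)
Definition posterior_weight y D : R :=
  fine (\int[P]_(x in D) (phi (y - x))%:E)%E.
Local Notation W := posterior_weight.

Let phiB_ge0 y x : (0 <= (phi (y - x))%:E)%E.
Proof. by rewrite lee_fin phi_ge0. Qed.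

Let measurable_EFin_phiB y D : measurable_fun D (fun x => (phi (y - x))%:E).
Proof. by apply/measurable_EFinP/measurable_funTS; exact: measurable_phiB. Qed.

Lemma posterior_weightE y D : measurable D ->
  (W y D)%:E = (\int[P]_(x in D) (phi (y - x))%:E)%E.
Proof.
move=> mD; rewrite fineK //; apply: (integrable_fin_num mD).
have := @measurable_bounded_integrable _ _ _ P (fun x => phi (y - x)) D mD.
apply.
- exact: le_lt_trans (probability_le1 P mD) (ltry _).
- by apply: measurable_funTS; exact: measurable_phiB.
- exists (normal_peak 1); split; first exact: num_real.
  move=> M M1 x _; rewrite /= ger0_norm ?phi_ge0 //.
  by rewrite (le_trans (phi_le_peak _)) ?ltW.
Qed.

Lemma posterior_weight_ge0 y D : 0 <= W y D.
Proof. by rewrite fine_ge0 // integral_ge0. Qed.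

Lemma posterior_weightU y A B : measurable A -> measurable B ->
  [disjoint A & B] -> W y (A `|` B) = W y A + W y B.
Proof.
move=> mA mB AB; apply: EFin_inj.
by rewrite EFinD !posterior_weightE ?ge0_integral_setU //; exact: measurableU.
Qed.

Lemma le_posterior_weight y A B : measurable A -> measurable B ->
  A `<=` B -> W y A <= W y B.
Proof.
by move=> mA mB AB; rewrite -lee_fin !posterior_weightE // ge0_subset_integral.
Qed.

Lemma posterior_weight_setT_gt0 y : 0 < W y setT.
Proof.
rewrite lt_neqAle posterior_weight_ge0 andbT; apply/eqP => W0.
have : (\int[P]_x `|(phi (y - x))%:E|)%E = 0%E.
  under eq_integral do rewrite gee0_abs //.
  by rewrite -posterior_weightE // -W0.
case/ae_eq_integral_abs => // N [mN PN0 sN].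
suff : (P setT <= P N)%E by rewrite PN0 probability_setT lee_fin ler10.
apply: le_measure; rewrite ?inE // => x _; apply: sN => /= /(_ I) /eqP.
by rewrite eqe gt_eqF ?phi_gt0.
Qed.

Lemma cvg_posterior_weight D (u : R^nat) c : measurable D ->
  u n @[n --> \oo] --> c -> W (u n) D @[n --> \oo] --> W c D.
Proof.
move=> mD uc; apply: fine_cvg; rewrite posterior_weightE //.
apply: (@dominated_cvg _ _ _ P D mD (fun n x => (phi (u n - x))%:E) _
  (fun=> (normal_peak 1)%:E)) => //.
- move=> x _; apply: cvg_EFin; first exact: nearW.
  exact: cvg_comp (cvgB uc (cvg_cst x)) (continuous_phi _).
- exact: finite_measure_integrable_cst.
- by move=> n x _; rewrite gee0_abs // lee_fin phi_le_peak.
Qed.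

Lemma le_posterior_weight_mul (k k' : R) u v D :
  measurable D -> 0 <= k -> 0 <= k' ->
  (forall x, D x -> k * phi (u - x) <= k' * phi (v - x)) ->
  k * W u D <= k' * W v D.
Proof.
move=> mD k0 k'0 le_kk'.
have WZ l y : 0 <= l ->
    (l * W y D)%:E = (\int[P]_(x in D) (l * phi (y - x))%:E)%E.
  move=> l0; transitivity (l%:E * \int[P]_(x in D) (phi (y - x))%:E)%E.
    by rewrite -(posterior_weightE y D mD).
  by rewrite -(ge0_integralZl_EFin _ mD (fun x _ => phiB_ge0 y x)
    (measurable_EFin_phiB y D) l0).
suff : (\int[P]_(x in D) (k * phi (u - x))%:E <=
        \int[P]_(x in D) (k' * phi (v - x))%:E)%E.
  by rewrite -(WZ k u k0) -(WZ k' v k'0).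
have mkphi l y : measurable_fun D (fun x => (l * phi (y - x))%:E).
  apply/measurable_EFinP/measurable_funM => //.
  by apply: measurable_funTS; exact: measurable_phiB.
apply: ge0_le_integral.
- exact: mD.
- by move=> x _; rewrite lee_fin mulr_ge0 ?phi_ge0.
- exact: mkphi.
- exact: mkphi.
- by move=> x Dx; rewrite lee_fin le_kk'.
Qed.

Lemma posterior_weight_tilt_lb c c' t D : measurable D -> c' <= c ->
  (forall x, D x -> x <= t) -> tilt c c' t * W c D <= W c' D.
Proof.
move=> mD c'c Dt; rewrite -[W c' D]mul1r.
apply: le_posterior_weight_mul => //; first exact/ltW/tilt_gt0.
move=> x /Dt xt; rewrite mul1r (phiB_tilt c c' x).
by rewrite ler_wpM2r ?phi_ge0 ?ler_tilt.
Qed.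

Lemma posterior_weight_tilt_ub c c' s D : measurable D -> c' <= c ->
  (forall x, D x -> s <= x) -> W c' D <= tilt c c' s * W c D.
Proof.
move=> mD c'c Ds; rewrite -[W c' D]mul1r.
apply: le_posterior_weight_mul => //; first exact/ltW/tilt_gt0.
move=> x /Ds sx; rewrite mul1r (phiB_tilt c c' x).
by rewrite ler_wpM2r ?phi_ge0 ?ler_tilt.
Qed.

Lemma posterior_weightT y t : W y setT = W y `]-oo, t] + W y `]t, +oo[.
Proof.
rewrite -posterior_weightU //; first by rewrite itv_setU_setT.
by rewrite -setCitvl; apply/disj_setPCl.
Qed.

Lemma posterior_weight_itvNyc y t :
  W y `]-oo, t] = W y `]-oo, t[ + W y [set t].
Proof.
rewrite -posterior_weightU //; first by rewrite setUitv1.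
rewrite -[[set t]]setCK; apply/disj_setPCl => x /=.
by rewrite in_itv /= => /lt_eqF /eqP.
Qed.

End posterior_weight.

Lemma near_at_right_neq0 {R : realType} (c : R) : \forall x \near c^'+, x != 0.
Proof.
have [c0|c0] := ltP c 0; near=> x.
- by rewrite lt_eqF //; near: x; exact: nbhs_right_lt.
- by rewrite gt_eqF // (le_lt_trans c0) //; near: x; exact: nbhs_right_gt.
Unshelve. all: by end_near. Qed.

Lemma near_at_left_neq0 {R : realType} (c : R) : \forall x \near c^'-, x != 0.
Proof.
have [c0|c0] := leP c 0; near=> x.
- by rewrite lt_eqF // (lt_le_trans _ c0) //; near: x; exact: nbhs_left_lt.
- by rewrite gt_eqF //; near: x; exact: nbhs_left_gt.
Unshelve. all: by end_near. Qed.

Section cond_median.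
Context {R : realType} (P : probability R R).
Local Notation W := (posterior_weight P).
Implicit Types (a c y t : R).

Lemma half_le_cond_cdf y t :
  (2^-1 <= cond_cdf P y t) = (W y setT <= 2 * W y `]-oo, t]).
Proof.
have W0 := posterior_weight_setT_gt0 P y.
rewrite /cond_cdf -/(W y _) -/(W y setT) ler_pdivlMr //.
by apply/idP/idP => ?; lra.
Qed.

(* [inf] is [0] on sets without an infimum, so a nonzero median certifies
   that the median set has one. *)
Let has_inf_median_set y : cond_median P y != 0 ->
  has_inf [set t | 2^-1 <= cond_cdf P y t].
Proof.
move=> m0; apply: contrapT => /inf_out m_eq0.
by rewrite /cond_median m_eq0 eqxx in m0.
Qed.

Lemma cond_median_lt y t : cond_median P y != 0 ->
  t < cond_median P y -> 2 * W y `]-oo, t] < W y setT.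
Proof.
move=> /has_inf_median_set [_ lbS] tm; rewrite ltNge -half_le_cond_cdf.
by apply/negP => St; have := ge_inf lbS St; rewrite leNgt tm.
Qed.

Lemma cond_median_gt y t : cond_median P y != 0 ->
  cond_median P y < t -> W y setT <= 2 * W y `]-oo, t[.
Proof.
move=> /has_inf_median_set [S0 _] mt; have [s /= Ss st] := inf_lt S0 mt.
apply: le_trans (_ : 2 * W y `]-oo, s] <= _).
  by rewrite -half_le_cond_cdf.
rewrite ler_pM2l // le_posterior_weight // => x /=; rewrite !in_itv /=.
by move=> /le_lt_trans; exact.
Qed.

Lemma balanced_of_cond_median a : 0 < a ->
  (forall y, cond_median P y = a * y) ->
  forall c, W c `]-oo, a * c[ = W c `]a * c, +oo[.
Proof.
(* The median at c itself does not see an atom of the posterior at ac (and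
   says nothing when c = 0), so it is used at c' -> c from either side. *)
move=> a0 med c; set m := a * c.
have med0 c' : c' != 0 -> cond_median P c' != 0.
  by move=> c'0; rewrite med mulf_neq0 // gt_eqF.
have le_right : 2 * W c `]-oo, m] <= W c setT.
  rewrite -subr_ge0; apply: (cvgr_to_ge (F := c^'+)
    (f := fun c' => W c' setT - 2 * W c' `]-oo, m])).
  - apply/cvg_at_rightP => u [_ uc].
    apply: cvgB; [|apply: cvgM; [exact: cvg_cst|]];
      exact: cvg_posterior_weight.
  - near=> c'; rewrite subr_ge0; apply/ltW/cond_median_lt.
    + by apply: med0; near: c'; exact: near_at_right_neq0.
    + by rewrite med ltr_pM2l //; near: c'; exact: nbhs_right_gt.
have le_left : W c setT <= 2 * W c `]-oo, m[.
  rewrite -subr_ge0; apply: (cvgr_to_ge (F := c^'-)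
    (f := fun c' => 2 * W c' `]-oo, m[ - W c' setT)).
  - apply/cvg_at_leftP => u [_ uc].
    apply: cvgB; [apply: cvgM; [exact: cvg_cst|]|];
      exact: cvg_posterior_weight.
  - near=> c'; rewrite subr_ge0; apply: cond_median_gt.
    + by apply: med0; near: c'; exact: near_at_left_neq0.
    + by rewrite med ltr_pM2l //; near: c'; exact: nbhs_left_lt.
have := posterior_weightT P c m; have := posterior_weight_itvNyc P c m.
have := posterior_weight_ge0 P c [set m]; lra.
Unshelve. all: by end_near. Qed.

Lemma balanced_lbound a y : 0 < a ->
  (forall c, W c `]-oo, a * c[ = W c `]a * c, +oo[) ->
  lbound [set t | 2^-1 <= cond_cdf P y t] (a * y).
Proof.
move=> a0 bal t /=; rewrite half_le_cond_cdf => St; rewrite leNgt; apply/negP.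
move=> tm; pose s := (t + a * y) / 2; pose c' := s / a.
have ts : t < s by rewrite /s ltr_pdivlMr // mulr_natr mulr2n ltrD2l.
have c'y : c' < y.
  by rewrite /c' ltr_pdivrMr // mulrC /s ltr_pdivrMr // mulr_natr mulr2n ltrD2r.
have bal' : W c' `]-oo, s[ = W c' `]s, +oo[.
  by rewrite -[s](divfK (lt0r_neq0 a0)) mulrC bal.
have Wt_gt0 : 0 < W y `]-oo, t].
  by have := lt_le_trans (posterior_weight_setT_gt0 P y) St; rewrite pmulr_rgt0.
have Wt_ge : W y `]t, +oo[ <= W y `]-oo, t].
  by move: St; rewrite (posterior_weightT P y t) mulr_natl mulr2n lerD2l.
have lo : tilt y c' t * W y `]-oo, t] <= W c' `]-oo, s[.
  apply: le_trans (posterior_weight_tilt_lb P y c' t `]-oo, t] _ (ltW c'y) _) _.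
  - exact: measurable_itv.
  - by move=> x /=; rewrite in_itv.
  - apply: le_posterior_weight => // x /=; rewrite !in_itv /=.
    by move=> /le_lt_trans; exact.
have hi : W c' `]s, +oo[ <= tilt y c' s * W y `]t, +oo[.
  apply: le_trans (posterior_weight_tilt_ub P y c' s `]s, +oo[ _ (ltW c'y) _) _.
  - exact: measurable_itv.
  - by move=> x /=; rewrite in_itv /= andbT => /ltW.
  - rewrite (ler_pM2l (tilt_gt0 y c' s)) le_posterior_weight // => x /=.
    by rewrite !in_itv /= !andbT; exact: lt_trans.
rewrite bal' in lo; have := le_trans lo hi; apply/negP; rewrite -ltNge.
apply: le_lt_trans (_ : _ <= tilt y c' s * W y `]-oo, t]) _.
  by rewrite (ler_pM2l (tilt_gt0 y c' s)); exact: Wt_ge.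
by rewrite (ltr_pM2r Wt_gt0) ltr_tilt.
Qed.

Lemma cond_median_of_balanced a : 0 < a ->
  (forall c, W c `]-oo, a * c[ = W c `]a * c, +oo[) ->
  forall y, cond_median P y = a * y.
Proof.
move=> a0 bal y; have lb := balanced_lbound a y a0 bal.
have Sm : [set t | 2^-1 <= cond_cdf P y t] (a * y).
  rewrite /= half_le_cond_cdf (posterior_weightT P y (a * y)).
  rewrite posterior_weight_itvNyc bal.
  by have := posterior_weight_ge0 P y [set a * y]; lra.
apply/le_anti/andP; split; first exact: ge_inf (ex_intro _ _ lb) _ Sm.
exact: lb_le_inf (ex_intro _ _ Sm) lb.
Qed.

End cond_median.

Section mu_meas_transfer.
Context {R : realType} (P : probability R R) (a : R).
Hypothesis a_gt0 : 0 < a.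
Local Notation W := (posterior_weight P).
Local Notation sa := (Num.sqrt a).
Implicit Types (c : R) (D : set R).

Let sa_gt0 : 0 < sa. Proof. by rewrite sqrtr_gt0. Qed.
Let sa_neq0 : sa != 0. Proof. exact: lt0r_neq0. Qed.
Let sqr_sa : sa ^+ 2 = a. Proof. by rewrite sqr_sqrtr // ltW. Qed.

Let measurable_divr_sa : measurable_fun setT (fun x : R => x / sa).
Proof. exact: measurable_funM. Qed.

Lemma ge0_integral_mu_meas (f : R -> \bar R) :
  (forall x, 0 <= f x)%E -> measurable_fun setT f ->
  (\int[mu_meas P a]_x f x =
   \int[P]_x (f (x / sa)%R * dens a (x / sa)%R))%E.
Proof.
move=> f0 mf; pose g x := expR ((1 - a) * x ^+ 2 / 2).
have mg : measurable_fun setT g.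
  apply: measurableT_comp => //; apply: measurable_funM => //.
  exact: measurable_funM.
rewrite (ge0_integral_density (scaled P a) _ g mg) //; last first.
  by move=> x; exact: expR_ge0.
rewrite (eq_measure_integral (pushforward P (fun x => x / sa))) //.
rewrite ge0_integral_pushforward //.
- apply: emeasurable_funM => //; exact/measurable_EFinP.
- by move=> x _; rewrite mule_ge0 // lee_fin expR_ge0.
Qed.

Lemma integral_mu_meas_phiB c D : measurable D ->
  (\int[mu_meas P a]_(x in D) (phi (sa * c - x))%:E)%E =
  (expR ((1 - a) * c ^+ 2 / 2) * W c ((fun x => x / sa) @^-1` D))%:E.
Proof.
move=> mD; have mD' : measurable ((fun x => x / sa) @^-1` D).
  by rewrite -[X in measurable X]setTI; exact: measurable_divr_sa.
rewrite integral_mkcond ge0_integral_mu_meas; first last.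
- apply/(measurable_restrictT _ mD)/measurable_EFinP/measurable_funTS.
  exact: measurable_phiB.
- by move=> x; rewrite patchE; case: ifP => _ //; rewrite lee_fin phi_ge0.
rewrite EFinM (posterior_weightE P c _ mD').
rewrite -(ge0_integralZl_EFin _ mD'); first last.
- exact: expR_ge0.
- by apply/measurable_EFinP/measurable_funTS; exact: measurable_phiB.
- by move=> x _; rewrite lee_fin phi_ge0.
rewrite [RHS]integral_mkcond; apply: eq_integral => x _.
rewrite !patchE.
have -> : (x \in (fun x => x / sa) @^-1` D) = (x / sa \in D) by [].
case: ifP => _; last exact: mul0e.
rewrite /dens -!EFinM.
by have := phiB_scale sa c x sa_neq0; rewrite sqr_sa => ->.
Qed.

Lemma integral_mu_meas_sgB c :
  (\int[mu_meas P a]_x (Num.sg (x - sa * c) * phi (sa * c - x))%:E)%E =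
  (expR ((1 - a) * c ^+ 2 / 2) * (W c `]a * c, +oo[ - W c `]-oo, a * c[))%:E.
Proof.
have phi_ge0' x : 0 <= phi (sa * c - x) by exact: phi_ge0.
rewrite integralE (funepos_sgB _ _ phi_ge0') (funeneg_sgB _ _ phi_ge0').
rewrite -!integral_mkcond !integral_mu_meas_phiB //.
rewrite preimage_divr_itvoy // preimage_divr_itvNyo // sqr_sa.
by rewrite -EFinB mulrBr.
Qed.

End mu_meas_transfer.

Theorem proposition5 (R : realType) (P : probability R R) (a : R) (ha : 0 < a) :
  (forall y : R, cond_median P y = a * y) <->
  (forall y : R,
     0%E = (\int[mu_meas P a]_x (Num.sg (x - y) * phi (y - x))%:E)%E /\
     (\int[mu_meas P a]_x (Num.sg (x - y) * phi (y - x))%:E)%E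
       = (\int[mu_meas P a]_x (gprime (x - y))%:E)%E).
Proof.
have yE (y : R) : y = Num.sqrt a * (y / Num.sqrt a).
  by rewrite mulrC divfK // gt_eqF // sqrtr_gt0.
split=> [med y | bal].
- split; last by apply: eq_integral => x _; rewrite /gprime -phiN opprB.
  rewrite (yE y) integral_mu_meas_sgB //.
  by rewrite (balanced_of_cond_median P a ha med) subrr mulr0.
- apply: (cond_median_of_balanced P a ha) => c.
  have [+ _] := bal (Num.sqrt a * c); rewrite integral_mu_meas_sgB //.
  move=> /esym/eqP; rewrite eqe mulf_eq0 gt_eqF ?expR_gt0 //= subr_eq0.
  by move=> /eqP ->.
Qed.
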